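(* Let $D$ be a CAEXT derivation ending in a configuration $C=\langle A,\mathcal I,\pi\rangle\neq\mathsf{unsat}$. Then for all array terms $a$ and propagated terms $t$ (reads $b[i]$ or constant arrays $\langle v\rangle$): if $\mathcal I\neq\mathcal I_0$ and $\mathcal R(a,t)\neq()$, then $\mathcal I\models\mathcal R(a,t)$ (in the empty theory).
   Context: Theory. Many-sorted first-order logic with equality. There is an index sort $\sigma$, an element sort $\tau$, and an array sort $(\sigma\to\tau)$, with function symbols: read $a[i]$, write $a\langle i\triangleleft u\rangle$, and constant array $\langle v\rangle$. The empty theory treats all these symbols (and the array sort) as uninterpreted. $T(A)$ is the set of terms occurring in $A$, $T_{\mathcal A}(A)$ the set of array terms in $A$, and $W(A)=\{a\langle i\triangleleft u\rangle[i]\approx u \mid a\langle i\triangleleft u\rangle\in T(A)\}$. Configurations. A configuration is either $\mathsf{unsat}$ or a triple $\langle A,\mathcal I,\pi\rangle$ where $A$ is a set of formulas (with flat literals), $\mathcal I$ is either $\mathcal I_0=\mathsf{none}$ or an interpretation in the empty theory satisfying $A$, and $\pi$ maps pairs $(a,t)$ ($a$ an array term, $t$ a read term $b[i]$ or a constant array term $\langle v\rangle$) to either the undefined value $()$ or a pair $(r,c)$ with $r$ a formula and $c$ an array term. $\pi_0$ maps every pair to $()$; the initial configuration for $A$ is $\langle A,\mathcal I_0,\pi_0\rangle$. Reasons. $\mathcal R(a,t)=()$ if $\pi(a,t)=()$; otherwise $\mathcal R(a,t)=\top$ if $t=a$ or $t=a[i]$ for some $i$; otherwise $\mathcal R(a,t)=\mathcal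 R(c,t)\wedge r$ where $\pi(a,t)=(r,c)$. Updated indices $I(a,\langle v\rangle)$: $()$ if $\pi(a,\langle v\rangle)=()$; $\emptyset$ if $a=\langle v\rangle$; $I(b,\langle v\rangle)\cup\{j\}$ if $\pi(a,\langle v\rangle)=(\top,b)$ with $b=a\langle j\triangleleft u\rangle$ or $a=b\langle j\triangleleft u\rangle$; otherwise $I(c,\langle v\rangle)$ where $\pi(a,\langle v\rangle)=(r,c)$. ''$\mathcal I\models\varphi$'' refers to the current $\mathcal I$ (empty theory); such premises require $\mathcal I\ne\mathcal I_0$. ''Reset'' means $(\mathcal I,\pi):=(\mathcal I_0,\pi_0)$. Rules of CAEXT: Interp: if $\mathcal I=\mathcal I_0$ and $\mathcal I'\models A\cup W(A)$ in the empty theory, set $\mathcal I:=\mathcal I'$. Conf: if $A\cup W(A)$ is empty-theory unsatisfiable, derive $\mathsf{unsat}$. InitR: $a[i]\in T(A)$ ⟹ $\pi(a,a[i]):=(\top,a)$. InitW: $s=a\langle i\triangleleft u\rangle\in T(A)$ ⟹ $\pi(s,s[i]):=(\top,s)$. RowD: $\mathcal I\models i\not\approx j$, $\pi(a\langle j\triangleleft u\rangle,b[i])\ne()$, $\pi(a,b[i])=()$ ⟹ $\pi(a,b[i]):=(i\not\approx j,a\langle j\triangleleft u\rangle)$. RowU: $\mathcal I\models i\not\approx j$, $a\langle j\triangleleft u\rangle\in T(A)$, $\pi(a,b[i])\ne()$, $\pi(a\langle j\triangleleft u\rangle,b[i])=()$ ⟹ $\pi(a\langle j\triangleleft u\rangle,b[i]):=(i\not\approx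 j,a)$. EqR: $\mathcal I\models a\approx c$, $a,c\in T_{\mathcal A}(A)$, $a\approx c\in T(A)$, $\pi(a,b[i])\ne()$, $\pi(c,b[i])=()$ ⟹ $\pi(c,b[i]):=(a\approx c,a)$. EqL: symmetric, $\pi(a,b[i]):=(a\approx c,c)$. CongR: $\mathcal I\models i\approx k$, $\pi(a,b[i])\ne()$, $\pi(a,c[k])\ne()$, $\mathcal I\models b[i]\not\approx c[k]$ ⟹ add $\mathcal R(a,b[i])\wedge\mathcal R(a,c[k])\wedge i\approx k\Rightarrow b[i]\approx c[k]$ to $A$, reset. DisEq: $\mathcal I\models a\not\approx c$, $a,c\in T_{\mathcal A}(A)$, $a\approx c\in T(A)$, $k_{\{a,c\}}\notin T(A)$ ⟹ add $a\not\approx c\Rightarrow a[k_{\{a,c\}}]\not\approx c[k_{\{a,c\}}]$ (fresh index constant $k_{\{a,c\}}$), reset. Roc: $\pi(\langle v\rangle,b[i])\ne()$, $\mathcal I\models b[i]\not\approx v$ ⟹ add $\mathcal R(\langle v\rangle,b[i])\Rightarrow b[i]\approx v$, reset. InitC: $\langle v\rangle\in T(A)$ ⟹ $\pi(\langle v\rangle,\langle v\rangle):=(\top,\langle v\rangle)$. CowD: $\pi(a\langle j\triangleleft u\rangle,\langle v\rangle)\ne()$, $\pi(a,\langle v\rangle)=()$, $\mathcal I\models\exists i{:}\sigma.\bigwedge_{k\in I(a\langle j\triangleleft u\rangle,\langle v\rangle)\cup\{j\}}i\not\approx k$ ⟹ $\pi(a,\langle v\rangle):=(\top,a\langle j\triangleleft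 u\rangle)$. CowU: $\pi(a,\langle v\rangle)\ne()$, $\pi(a\langle j\triangleleft u\rangle,\langle v\rangle)=()$, $a\langle j\triangleleft u\rangle\in T(A)$, $\mathcal I\models\exists i{:}\sigma.\bigwedge_{k\in I(a,\langle v\rangle)\cup\{j\}}i\not\approx k$ ⟹ $\pi(a\langle j\triangleleft u\rangle,\langle v\rangle):=(\top,a)$. CEqR: $\mathcal I\models a\approx c$, $a,c\in T_{\mathcal A}(A)$, $a\approx c\in T(A)$, $\pi(a,\langle v\rangle)\ne()$, $\pi(c,\langle v\rangle)=()$ ⟹ $\pi(c,\langle v\rangle):=(a\approx c,a)$. CEqL: symmetric, $\pi(a,\langle v\rangle):=(a\approx c,c)$. CongC: $\pi(a,\langle v\rangle)\ne()$, $\pi(a,\langle w\rangle)\ne()$, $\mathcal I\models v\not\approx w$, $\mathcal I\models\exists i{:}\sigma.\bigwedge_{k\in I(a,\langle v\rangle)\cup I(a,\langle w\rangle)}i\not\approx k$ ⟹ add $\mathcal R(a,\langle v\rangle)\wedge\mathcal R(a,\langle w\rangle)\wedge\exists i{:}\sigma.\bigwedge_{k\in I(a,\langle v\rangle)\cup I(a,\langle w\rangle)}i\not\approx k\Rightarrow v\approx w$, reset. Conflict rules: CongR, DisEq, Roc, CongC. A derivation is a sequence of configurations starting from an initial configuration, each obtained from the previous by a rule application. *)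

From Stdlib Require Import List.
Import ListNotations.

Inductive iterm : Type :=
| IConst : nat -> iterm
| IDiff  : aterm -> aterm -> iterm      (* the fresh index constant k_{a,c} (atomic) *)
with eterm : Type :=
| EConst : nat -> eterm
| ERead  : aterm -> iterm -> eterm
with aterm : Type :=
| AConst : nat -> aterm
| AWrite : aterm -> iterm -> eterm -> aterm
| AConstArr : eterm -> aterm.

Inductive term : Type :=
| TI : iterm -> term
| TE : eterm -> term
| TA : aterm -> term.

Inductive pterm : Type :=
| PRead : aterm -> iterm -> pterm
| PConst : eterm -> pterm.

Inductive formula : Type :=
| FTrue | FFalse
| FEqI : iterm -> iterm -> formula
| FEqE : eterm -> eterm -> formula
| FEqA : aterm -> aterm -> formula
| FNot : formula -> formula
| FAnd : formula -> formula -> formula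
| FOr  : formula -> formula -> formula
| FImp : formula -> formula -> formula
| FExDiff : list iterm -> formula.

Definition sub_i (i : iterm) : list term :=
  match i with
  | IConst _ => [TI i]
  | IDiff _ _ => [TI i]   (* k_{a,c} is a constant symbol *)
  end.
Fixpoint sub_e (e : eterm) : list term :=
  match e with
  | EConst _ => [TE e]
  | ERead a i => TE e :: sub_a a ++ sub_i i
  end
with sub_a (a : aterm) : list term :=
  match a with
  | AConst _ => [TA a]
  | AWrite b i u => TA a :: sub_a b ++ sub_i i ++ sub_e u
  | AConstArr v => TA a :: sub_e v
  end.

Fixpoint fterms (F : formula) : list term :=
  match F with
  | FTrue | FFalse => []
  | FEqI i j => sub_i i ++ sub_i j
  | FEqE x y => sub_e x ++ sub_e y
  | FEqA a b => sub_a a ++ sub_a b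
  | FNot f => fterms f
  | FAnd f g | FOr f g | FImp f g => fterms f ++ fterms g
  | FExDiff Ks => flat_map sub_i Ks
  end.

Fixpoint atoms (F : formula) : list formula :=
  match F with
  | FTrue | FFalse | FExDiff _ => []
  | FEqI _ _ | FEqE _ _ | FEqA _ _ => [F]
  | FNot f => atoms f
  | FAnd f g | FOr f g | FImp f g => atoms f ++ atoms g
  end.

Definition inT (A : list formula) (t : term) : Prop :=
  exists F, In F A /\ In t (fterms F).
(* the atom a ~ c (as written) occurs in A *)
Definition eqA_inT (A : list formula) (a c : aterm) : Prop :=
  exists F, In F A /\ In (FEqA a c) (atoms F).

Record interp : Type := Interp {
  DI : Type; DE : Type; DA : Type;
  iconst : nat -> DI;
  idiff : aterm -> aterm -> DI;
  econst : nat -> DE;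
  aconst : nat -> DA;
  rd : DA -> DI -> DE;
  wr : DA -> DI -> DE -> DA;
  carr : DE -> DA }.

Section Eval.
Variable M : interp.
Fixpoint ev_i (i : iterm) : DI M :=
  match i with
  | IConst n => iconst M n
  | IDiff a c => idiff M a c
  end.
Fixpoint ev_e (e : eterm) : DE M :=
  match e with
  | EConst n => econst M n
  | ERead a i => rd M (ev_a a) (ev_i i)
  end
with ev_a (a : aterm) : DA M :=
  match a with
  | AConst n => aconst M n
  | AWrite b i u => wr M (ev_a b) (ev_i i) (ev_e u)
  | AConstArr v => carr M (ev_e v)
  end.

Fixpoint sat (F : formula) : Prop :=
  match F with
  | FTrue => True
  | FFalse => False
  | FEqI i j => ev_i i = ev_i j
  | FEqE x y => ev_e x = ev_e y
  | FEqA a b => ev_a a = ev_a b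
  | FNot f => ~ sat f
  | FAnd f g => sat f /\ sat g
  | FOr f g => sat f \/ sat g
  | FImp f g => sat f -> sat g
  | FExDiff Ks => exists d : DI M, forall k, In k Ks -> d <> ev_i k
  end.
End Eval.

Definition Wformula (a : aterm) (i : iterm) (u : eterm) : formula :=
  FEqE (ERead (AWrite a i u) i) u.

Definition satAW (M : interp) (A : list formula) : Prop :=
  (forall F, In F A -> sat M F) /\
  (forall a i u, inT A (TA (AWrite a i u)) -> sat M (Wformula a i u)).

Definition pimap := aterm -> pterm -> option (formula * aterm).
Definition pi0 : pimap := fun _ _ => None.

Inductive config : Type :=
| Unsat : config
| Conf : list formula -> option interp -> pimap -> config.

(* initial configuration <A, I0, pi0>; I0 = None *)
Definition init_conf (A : list formula) : config := Conf A None pi0.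

Definition pupd (pi pi' : pimap) (a : aterm) (t : pterm) (x : formula * aterm) : Prop :=
  pi' a t = Some x /\
  forall a' t', (a', t') <> (a, t) -> pi' a' t' = pi a' t'.

Definition own (a : aterm) (t : pterm) : Prop :=
  match t with
  | PRead b _ => b = a
  | PConst v => a = AConstArr v
  end.

(* Reasons R(a,t): None stands for () *)
Inductive reason (pi : pimap) : aterm -> pterm -> option formula -> Prop :=
| reason_undef a t : pi a t = None -> reason pi a t None
| reason_own a t x : pi a t = Some x -> own a t -> reason pi a t (Some FTrue)
| reason_step a t r c r' :
    pi a t = Some (r, c) -> ~ own a t ->
    reason pi c t (Some r') -> reason pi a t (Some (FAnd r' r)).

(* Updated indices I(a,<v>): None stands for () *)
Inductive updidx (pi : pimap) : aterm -> eterm -> option (list iterm) -> Prop :=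
| upd_undef a v : pi a (PConst v) = None -> updidx pi a v None
| upd_self a v x : pi a (PConst v) = Some x -> a = AConstArr v ->
    updidx pi a v (Some [])
| upd_write a v b j u S :
    pi a (PConst v) = Some (FTrue, b) -> a <> AConstArr v ->
    (b = AWrite a j u \/ a = AWrite b j u) ->
    updidx pi b v (Some S) -> updidx pi a v (Some (S ++ [j]))
| upd_other a v r c S :
    pi a (PConst v) = Some (r, c) -> a <> AConstArr v ->
    ~ (r = FTrue /\ exists j u, c = AWrite a j u \/ a = AWrite c j u) ->
    updidx pi c v (Some S) -> updidx pi a v (Some S).

Inductive step : config -> config -> Prop :=
| R_Interp A pi M :
    satAW M A -> step (Conf A None pi) (Conf A (Some M) pi)
| R_Conf A I pi :
    ~ (exists M : interp, satAW M A) -> step (Conf A I pi) Unsat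
| R_InitR A I pi pi' a i :
    inT A (TE (ERead a i)) -> pupd pi pi' a (PRead a i) (FTrue, a) ->
    step (Conf A I pi) (Conf A I pi')
| R_InitW A I pi pi' a i u :
    inT A (TA (AWrite a i u)) ->
    pupd pi pi' (AWrite a i u) (PRead (AWrite a i u) i) (FTrue, AWrite a i u) ->
    step (Conf A I pi) (Conf A I pi')
| R_RowD A M pi pi' a j u b i :
    sat M (FNot (FEqI i j)) ->
    pi (AWrite a j u) (PRead b i) <> None -> pi a (PRead b i) = None ->
    pupd pi pi' a (PRead b i) (FNot (FEqI i j), AWrite a j u) ->
    step (Conf A (Some M) pi) (Conf A (Some M) pi')
| R_RowU A M pi pi' a j u b i :
    sat M (FNot (FEqI i j)) -> inT A (TA (AWrite a j u)) ->
    pi a (PRead b i) <> None -> pi (AWrite a j u) (PRead b i) = None ->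
    pupd pi pi' (AWrite a j u) (PRead b i) (FNot (FEqI i j), a) ->
    step (Conf A (Some M) pi) (Conf A (Some M) pi')
| R_EqR A M pi pi' a c b i :
    sat M (FEqA a c) -> inT A (TA a) -> inT A (TA c) -> eqA_inT A a c ->
    pi a (PRead b i) <> None -> pi c (PRead b i) = None ->
    pupd pi pi' c (PRead b i) (FEqA a c, a) ->
    step (Conf A (Some M) pi) (Conf A (Some M) pi')
| R_EqL A M pi pi' a c b i :
    sat M (FEqA a c) -> inT A (TA a) -> inT A (TA c) -> eqA_inT A a c ->
    pi c (PRead b i) <> None -> pi a (PRead b i) = None ->
    pupd pi pi' a (PRead b i) (FEqA a c, c) ->
    step (Conf A (Some M) pi) (Conf A (Some M) pi')
| R_CongR A M pi a b i c k r1 r2 :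
    sat M (FEqI i k) ->
    pi a (PRead b i) <> None -> pi a (PRead c k) <> None ->
    sat M (FNot (FEqE (ERead b i) (ERead c k))) ->
    reason pi a (PRead b i) (Some r1) -> reason pi a (PRead c k) (Some r2) ->
    step (Conf A (Some M) pi)
         (Conf (FImp (FAnd (FAnd r1 r2) (FEqI i k)) (FEqE (ERead b i) (ERead c k)) :: A)
               None pi0)
| R_DisEq A M pi a c :
    sat M (FNot (FEqA a c)) -> inT A (TA a) -> inT A (TA c) -> eqA_inT A a c ->
    ~ inT A (TI (IDiff a c)) -> ~ inT A (TI (IDiff c a)) ->
    step (Conf A (Some M) pi)
         (Conf (FImp (FNot (FEqA a c))
                     (FNot (FEqE (ERead a (IDiff a c)) (ERead c (IDiff a c)))) :: A)
               None pi0)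
| R_Roc A M pi v b i r :
    pi (AConstArr v) (PRead b i) <> None ->
    sat M (FNot (FEqE (ERead b i) v)) ->
    reason pi (AConstArr v) (PRead b i) (Some r) ->
    step (Conf A (Some M) pi)
         (Conf (FImp r (FEqE (ERead b i) v) :: A) None pi0)
| R_InitC A I pi pi' v :
    inT A (TA (AConstArr v)) ->
    pupd pi pi' (AConstArr v) (PConst v) (FTrue, AConstArr v) ->
    step (Conf A I pi) (Conf A I pi')
| R_CowD A M pi pi' a j u v S :
    pi (AWrite a j u) (PConst v) <> None -> pi a (PConst v) = None ->
    updidx pi (AWrite a j u) v (Some S) ->
    sat M (FExDiff (S ++ [j])) ->
    pupd pi pi' a (PConst v) (FTrue, AWrite a j u) ->
    step (Conf A (Some M) pi) (Conf A (Some M) pi')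
| R_CowU A M pi pi' a j u v S :
    pi a (PConst v) <> None -> pi (AWrite a j u) (PConst v) = None ->
    inT A (TA (AWrite a j u)) ->
    updidx pi a v (Some S) ->
    sat M (FExDiff (S ++ [j])) ->
    pupd pi pi' (AWrite a j u) (PConst v) (FTrue, a) ->
    step (Conf A (Some M) pi) (Conf A (Some M) pi')
| R_CEqR A M pi pi' a c v :
    sat M (FEqA a c) -> inT A (TA a) -> inT A (TA c) -> eqA_inT A a c ->
    pi a (PConst v) <> None -> pi c (PConst v) = None ->
    pupd pi pi' c (PConst v) (FEqA a c, a) ->
    step (Conf A (Some M) pi) (Conf A (Some M) pi')
| R_CEqL A M pi pi' a c v :
    sat M (FEqA a c) -> inT A (TA a) -> inT A (TA c) -> eqA_inT A a c ->
    pi c (PConst v) <> None -> pi a (PConst v) = None ->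
    pupd pi pi' a (PConst v) (FEqA a c, c) ->
    step (Conf A (Some M) pi) (Conf A (Some M) pi')
| R_CongC A M pi a v w Sv Sw rv rw :
    pi a (PConst v) <> None -> pi a (PConst w) <> None ->
    sat M (FNot (FEqE v w)) ->
    updidx pi a v (Some Sv) -> updidx pi a w (Some Sw) ->
    sat M (FExDiff (Sv ++ Sw)) ->
    reason pi a (PConst v) (Some rv) -> reason pi a (PConst w) (Some rw) ->
    step (Conf A (Some M) pi)
         (Conf (FImp (FAnd (FAnd rv rw) (FExDiff (Sv ++ Sw))) (FEqE v w) :: A)
               None pi0).

Inductive derivation (A0 : list formula) : config -> Prop :=
| der_init : derivation A0 (init_conf A0)
| der_step C C' : derivation A0 C -> step C C' -> derivation A0 C'.

(* Every entry (r, c) stored in pi is either [FTrue] (written by InitR, InitW,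
   InitC, CowD or CowU) or a literal i ≉ j, a ≈ c checked in the current
   model by RowD, RowU, EqR, EqL, CEqR or CEqL.  Interp keeps pi but only
   happens while no model is present, when all entries are [FTrue]; the
   conflict rules reset pi to pi0.  Hence the current model satisfies every
   stored formula, and a reason is a conjunction of such formulas. *)
From Stdlib Require Import Classical.

Definition pi_reasons_hold (P : formula -> Prop) (pi : pimap) : Prop :=
  forall a t r c, pi a t = Some (r, c) -> P r.

Definition reason_ok (I : option interp) (r : formula) : Prop :=
  match I with
  | Some M => sat M r
  | None => r = FTrue
  end.

Definition config_inv (C : config) : Prop :=
  match C with
  | Unsat => True
  | Conf _ Im pi => pi_reasons_hold (reason_ok Im) pi
  end.

Lemma reason_ok_true (I : option interp) : reason_ok I FTrue.
Proof. destruct I; simpl; trivial. Qed.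

Lemma pi0_reasons_hold (P : formula -> Prop) : pi_reasons_hold P pi0.
Proof. intros a t r c E; discriminate E. Qed.

Lemma pupd_reasons_hold (P : formula -> Prop) pi pi' a t r c :
  pi_reasons_hold P pi -> P r -> pupd pi pi' a t (r, c) ->
  pi_reasons_hold P pi'.
Proof.
  intros Hpi Hr [Hnew Hold] a' t' r' c' E.
  destruct (classic ((a', t') = (a, t))) as [Heq | Hne].
  - injection Heq as -> ->. rewrite Hnew in E. injection E as <- _. exact Hr.
  - rewrite Hold in E by exact Hne. exact (Hpi _ _ _ _ E).
Qed.

Lemma trivial_reasons_hold_in (M : interp) pi :
  pi_reasons_hold (reason_ok None) pi -> pi_reasons_hold (reason_ok (Some M)) pi.
Proof.
  intros Hpi a t r c E. simpl in Hpi. rewrite (Hpi _ _ _ _ E). exact Logic.I.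
Qed.

Lemma step_preserves_inv (C C' : config) :
  config_inv C -> step C C' -> config_inv C'.
Proof.
  intros Hinv Hstep.
  destruct Hstep; simpl in *;
    (* the conflict rules and Conf *)
    try exact Logic.I; try apply pi0_reasons_hold.
  1: (* Interp *) exact (trivial_reasons_hold_in M pi Hinv).
  all: eapply pupd_reasons_hold; [exact Hinv | | eassumption]; simpl.
  - apply reason_ok_true.
  - apply reason_ok_true.
  - assumption.
  - assumption.
  - assumption.
  - assumption.
  - apply reason_ok_true.
  - exact Logic.I.
  - exact Logic.I.
  - assumption.
  - assumption.
Qed.

Lemma derivation_inv (A0 : list formula) (C : config) :
  derivation A0 C -> config_inv C.
Proof.
  induction 1 as [| C C' _ IH Hstep].
  - apply pi0_reasons_hold.
  - exact (step_preserves_inv C C' IH Hstep).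
Qed.

Lemma reason_sat (M : interp) pi a t o :
  pi_reasons_hold (sat M) pi -> reason pi a t o ->
  match o with Some r => sat M r | None => True end.
Proof.
  intros Hpi Hreason.
  induction Hreason as [| | a t r c r' Hrc _ _ IH]; simpl; trivial.
  split; [exact IH | exact (Hpi _ _ _ _ Hrc)].
Qed.

Theorem mainTheorem7 (A0 : list formula) (A : list formula)
    (I : option interp) (pi : pimap) :
  derivation A0 (Conf A I pi) ->
  forall (a : aterm) (t : pterm) (r : formula),
    I <> None ->
    reason pi a t (Some r) ->
    forall M : interp, I = Some M -> sat M r.
Proof.
  intros D a t r _ Hreason M ->.
  exact (reason_sat M pi a t (Some r) (derivation_inv A0 _ D) Hreason).
Qed.
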